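(* In the algebra $\mathcal{A}$ described in the context, let \[\tilde A^{\mathrm{bi}}_{s;mn}(W)=\{(E_n-s^2Q_n^2)(Q_m^2E_m-1)-(E_m-s^2Q_m^2)(Q_n^2E_n-1)\}Q_mQ_n\] and \[A^{\mathrm{bi};2}_{s;mn}(W)=\{u_1(s,E_n,Q_n)(E_n-s^2Q_n^2)v_1(s,E_m,Q_m)(Q_m^2E_m-1)-u_1(s,E_m,Q_m)(E_m-s^2Q_m^2)v_1(s,E_n,Q_n)(Q_n^2E_n-1)\}Q_mQ_n.\] Then $\tilde A^{\mathrm{bi}}_{s;mn}(W)$ is a right divisor of $A^{\mathrm{bi};2}_{s;mn}(W)$, i.e. $A^{\mathrm{bi};2}_{s;mn}(W)=C\,\tilde A^{\mathrm{bi}}_{s;mn}(W)$ for some $C\in\mathcal{A}$.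
   Context: $s$ is an indeterminate. $\mathcal{A}$ is the algebra of noncommutative polynomials in $E_m,E_n$ with coefficients in $\mathbb{Q}(s,Q_m,Q_n)$ written on the left, subject to $E_mE_n=E_nE_m$, $E_m\,p(s,Q_m,Q_n)=p(s,sQ_m,Q_n)E_m$, $E_n\,p(s,Q_m,Q_n)=p(s,Q_m,sQ_n)E_n$ for rational functions $p$. For $(E,Q)\in\{(E_m,Q_m),(E_n,Q_n)\}$ put $\Phi_k(Q)=1-s^kQ^4$ and $u_1(s,E,Q)=\frac{1}{\Phi_6(Q)}E-\frac{s^2Q^2}{\Phi_2(Q)}$, $v_1(s,E,Q)=\frac{s^2Q^2}{\Phi_6(Q)}E-\frac{1}{\Phi_2(Q)}$. *)

From HB Require Import structures.
From mathcomp Require Import all_boot all_order all_algebra.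
From mathcomp Require Import generic_quotient fraction.
Set Implicit Arguments. Unset Strict Implicit. Unset Printing Implicit Defensive.
Import GRing.Theory.
Local Open Scope ring_scope.

(* Polynomial ring Q[s][Q_m][Q_n]: innermost variable s, middle Q_m, outer Q_n. *)
Definition Pring := {poly {poly {poly rat}}}.
Definition Kf := {fraction Pring}.
Notation tofracP := (@FracField.tofrac Pring).
Local Notation "x %:F" := (tofracP x).

Definition sP : Pring := ('X%:P)%:P.
Definition QmP : Pring := ('X : {poly {poly rat}})%:P.
Definition QnP : Pring := 'X.

(* p(s,Qm,Qn) |-> p(s, s Qm, Qn) on the polynomial ring *)
Definition sigmP_m (p : Pring) : Pring :=
  map_poly (fun q : {poly {poly rat}} => q \Po (('X : {poly rat})%:P * 'X)) p.
(* p(s,Qm,Qn) |-> p(s, Qm, s Qn) on the polynomial ring *)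
Definition sigmP_n (p : Pring) : Pring :=
  p \Po ((('X : {poly rat})%:P : {poly {poly rat}})%:P * 'X).

Definition lift_frac (f : Pring -> Pring) (x : Kf) : Kf :=
  let r := repr x in (f (frac r).1)%:F / (f (frac r).2)%:F.

Definition sigma_m : Kf -> Kf := lift_frac sigmP_m.
Definition sigma_n : Kf -> Kf := lift_frac sigmP_n.

Definition s_ : Kf := sP%:F.
Definition Qm : Kf := QmP%:F.
Definition Qn : Kf := QnP%:F.

(* The algebra A: elements are represented as commutative polynomials in
   E_n (outer variable) and E_m (inner variable) with coefficients in Kf
   written on the left: p = \sum_(i,j) p_ij E_m^j E_n^i.
   The product is the skew product determined by
   E_m a = sigma_m(a) E_m, E_n a = sigma_n(a) E_n, E_m E_n = E_n E_m. *)
Definition Alg := {poly {poly Kf}}.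

Definition shift (j i : nat) (a : Kf) : Kf := iter j sigma_m (iter i sigma_n a).

Definition amul (p q : Alg) : Alg :=
  \sum_(i < size p) \sum_(j < size p`_i)
     ((p`_i`_j)%:P%:P * map_poly (map_poly (shift j i)) q
        * ('X^j)%:P * 'X^i).

Definition Em : Alg := ('X)%:P.
Definition En : Alg := 'X.
Definition cst (a : Kf) : Alg := a%:P%:P.

Definition Phi (k : nat) (Q : Kf) : Kf := 1 - s_ ^+ k * Q ^+ 4.

Definition u1 (E : Alg) (Q : Kf) : Alg :=
  amul (cst (Phi 6 Q)^-1) E - cst (s_ ^+ 2 * Q ^+ 2 / Phi 2 Q).
Definition v1 (E : Alg) (Q : Kf) : Alg :=
  amul (cst (s_ ^+ 2 * Q ^+ 2 / Phi 6 Q)) E - cst (Phi 2 Q)^-1.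

Definition Atilde : Alg :=
  amul (amul (amul (En - cst (s_ ^+ 2 * Qn ^+ 2))
                   (amul (cst (Qm ^+ 2)) Em - 1)
            - amul (Em - cst (s_ ^+ 2 * Qm ^+ 2))
                   (amul (cst (Qn ^+ 2)) En - 1))
        (cst Qm)) (cst Qn).

Definition A2 : Alg :=
  amul (amul (
      amul (amul (amul (u1 En Qn) (En - cst (s_ ^+ 2 * Qn ^+ 2))) (v1 Em Qm))
           (amul (cst (Qm ^+ 2)) Em - 1)
    - amul (amul (amul (u1 Em Qm) (Em - cst (s_ ^+ 2 * Qm ^+ 2))) (v1 En Qn))
           (amul (cst (Qn ^+ 2)) En - 1))
    (cst Qm)) (cst Qn).

(* Write X = E - s^2 Q^2 and Y = Q^2 E - 1 for each pair (E, Q) = (E_m, Q_m),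
   (E_n, Q_n).  Since E Q = s Q E, both u_1 Y and v_1 X expand to
   s^2 Q^2/Phi_6 E^2 - (1 - s^8 Q^8)/(Phi_2 Phi_6) E + s^2 Q^2/Phi_2, so u_1 Y = v_1 X.
   Everything built from (E_m, Q_m) commutes with everything built from
   (E_n, Q_n); therefore
     u_n X_n v_m Y_m - u_m X_m v_n Y_n = (u_n v_m + u_m v_n) (X_n Y_m - X_m Y_n),
   since both cross terms of the right-hand side equal u_m Y_m v_n X_n.  Hence
   C = u_n v_m + u_m v_n.  Most of the work is to see that amul makes A an
   associative ring: it is bi-additive, on monomials it obeys
   E_m^j E_n^i a = sigma_m^j sigma_n^i (a) E_m^j E_n^i, and sigma_m and sigma_n
   commute. *)

From HB Require Import structures.
From mathcomp Require Import all_boot all_order all_algebra.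
From mathcomp Require Import generic_quotient fraction.
From mathcomp Require Import ring.
Set Implicit Arguments. Unset Strict Implicit. Unset Printing Implicit Defensive.
Import GRing.Theory.
Local Open Scope ring_scope.
Local Notation "x %:F" := (tofracP x).

Lemma iter_comm (T : Type) (f g : T -> T) : (forall x, f (g x) = g (f x)) ->
  forall m n x, iter m f (iter n g x) = iter n g (iter m f x).
Proof.
move=> fg m n x; elim: m => [|m IHm] //=; rewrite IHm.
by elim: n {IHm} => [|n IHn] //=; rewrite fg IHn.
Qed.

Section IterRMorphism.
Variables (R : pzRingType) (f : {rmorphism R -> R}).

Lemma iter_is_zmod_morphism n : zmod_morphism (iter n f).
Proof. by elim: n => [|n IHn] x y //=; rewrite IHn rmorphB. Qed.

Lemma iter_is_monoid_morphism n : monoid_morphism (iter n f).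
Proof.
split; first by elim: n => [|n IHn] //=; rewrite IHn rmorph1.
by elim: n => [|n IHn] x y //=; rewrite IHn rmorphM.
Qed.

HB.instance Definition _ n := GRing.isZmodMorphism.Build R R (iter n f)
  (iter_is_zmod_morphism n).
HB.instance Definition _ n := GRing.isMonoidMorphism.Build R R (iter n f)
  (iter_is_monoid_morphism n).
End IterRMorphism.

Section CoefSums.
Variables (R : nzRingType) (V : zmodType) (F : nat -> R -> V).

Lemma sum_coef_widen (p : {poly R}) n : (forall i, F i 0 = 0) -> (size p <= n)%N ->
  \sum_(i < size p) F i p`_i = \sum_(i < n) F i p`_i.
Proof.
move=> F0 le_p_n; rewrite (big_ord_widen n (fun i => F i p`_i) le_p_n) big_mkcond /=.
by apply: eq_bigr => i _; case: ltnP => // le_p_i; rewrite nth_default.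
Qed.

Lemma sum_coef_is_zmod_morphism : (forall i, zmod_morphism (F i)) ->
  zmod_morphism (fun p : {poly R} => \sum_(i < size p) F i p`_i).
Proof.
move=> F_additive p q; set n := maxn (size p) (size q).
have F0 i : F i 0 = 0 by have := F_additive i 0 0; rewrite !subrr.
have le_pq_n : (size (p - q)%R <= n)%N.
  by rewrite (leq_trans (size_polyD _ _)) // size_polyN.
rewrite !(@sum_coef_widen _ n) ?leq_maxl ?leq_maxr // -sumrB.
by apply: eq_bigr => i _; rewrite coefB F_additive.
Qed.
End CoefSums.

Lemma comp_poly2_inj (R : idomainType) (q : {poly R}) :
  size q = 2 -> injective (comp_poly q).
Proof. by move=> q2; apply: raddf_inj => p /eqP; rewrite comp_poly2_eq0 // => /eqP. Qed.

Lemma bimonomialM (R : comNzRingType) (a b : R) j i l k :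
  (a%:P * 'X^j)%:P * 'X^i * ((b%:P * 'X^l)%:P * 'X^k)
  = ((a * b)%:P * 'X^(j + l))%:P * 'X^(i + k) :> {poly {poly R}}.
Proof. by rewrite mulrACA -polyCM mulrACA -polyCM -!exprD. Qed.

Section OneVariableIdentity.
Variables (K : fieldType) (R : nzRingType) (c : {rmorphism K -> R}).
Variables (sigma : {rmorphism K -> K}) (E : R).
Hypothesis E_c : forall a, E * c a = c (sigma a) * E.
Variables (s Q : K).
Hypotheses (sigma_s : sigma s = s) (sigma_Q : sigma Q = s * Q).
Let Phi k := 1 - s ^+ k * Q ^+ 4.
Hypotheses (Phi2_neq0 : Phi 2 != 0) (Phi6_neq0 : Phi 6 != 0).

Lemma skew_linear_mul (a b a' b' : K) :
  (c a * E - c b) * (c a' * E - c b')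
  = c (a * sigma a') * E * E - c (a * sigma b' + b * a') * E + c (b * b').
Proof.
have E_cE x y : x * E * (c y * E) = x * c (sigma y) * E * E.
  by rewrite mulrA -(mulrA x) E_c !mulrA.
have E_c' x y : x * E * c y = x * c (sigma y) * E by rewrite -mulrA E_c mulrA.
rewrite mulrBl !mulrBr E_cE E_c' -!rmorphM rmorphD mulrDl.
by rewrite mulrA -rmorphM opprB opprD !addrA [LHS]addrAC.
Qed.

Lemma u1Y_eq_v1X :
  (c (Phi 6)^-1 * E - c (s ^+ 2 * Q ^+ 2 / Phi 2)) * (c (Q ^+ 2) * E - 1)
  = (c (s ^+ 2 * Q ^+ 2 / Phi 6) * E - c (Phi 2)^-1) * (E - c (s ^+ 2 * Q ^+ 2)).
Proof.
have -> : E - c (s ^+ 2 * Q ^+ 2) = c 1 * E - c (s ^+ 2 * Q ^+ 2).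
  by rewrite rmorph1 mul1r.
rewrite -(rmorph1 c) !skew_linear_mul (rmorph1 sigma) !(rmorphM sigma).
rewrite !sigma_s !sigma_Q.
have [P2 P6] : 1 - s ^+ 2 * Q ^+ 4 != 0 /\ 1 - s ^+ 6 * Q ^+ 4 != 0 by [].
congr (c _ * E * E - c _ * E + c _); rewrite /Phi /=; field; rewrite ?P2 ?P6 //.
Qed.
End OneVariableIdentity.

Section TwoVariableFactorization.
Variables (R : nzRingType) (M N : R -> Prop).
Hypothesis comm_MN : forall x y, M x -> N y -> GRing.comm x y.
Variables (um vm xm ym un vn xn yn : R).
Hypotheses (Mum : M um) (Mvm : M vm) (Mxm : M xm) (Mym : M ym).
Hypotheses (Nun : N un) (Nvn : N vn) (Nxn : N xn).
Hypotheses (uym : um * ym = vm * xm) (uyn : un * yn = vn * xn).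

Lemma two_variable_factorization :
  un * xn * vm * ym - um * xm * vn * yn = (un * vm + um * vn) * (xn * ym - xm * yn).
Proof.
have outer1 : un * vm * (xn * ym) = un * xn * vm * ym.
  by rewrite -!mulrA (mulrA vm) (comm_MN Mvm Nxn) !mulrA.
have outer2 : um * vn * (xm * yn) = um * xm * vn * yn.
  by rewrite -!mulrA (mulrA vn) -(comm_MN Mxm Nvn) !mulrA.
have inner : un * vm * (xm * yn) = um * vn * (xn * ym).
  rewrite mulrA -(mulrA un) -uym mulrA -(comm_MN Mum Nun) -(mulrA um un).
  rewrite -(comm_MN Mym Nun) mulrA -(mulrA _ un) uyn mulrA -(mulrA um ym).
  by rewrite (comm_MN Mym Nvn) mulrA -mulrA (comm_MN Mym Nxn).
by rewrite mulrDl !mulrBr outer1 outer2 inner addrA subrK.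
Qed.
End TwoVariableFactorization.

Lemma repr_fracE (x : Kf) : x = (\n_(repr x))%:F / (\d_(repr x))%:F.
Proof.
have pi_ratio (r : {ratio Pring}) : (\pi_Kf r)%qT * (\d_r)%:F = (\n_r)%:F.
  unlock FracField.tofrac; rewrite !piE; apply/eqmodP => /=.
  rewrite FracField.equivfE /= !numden_Ratio ?mulf_neq0 ?oner_neq0 ?denom_ratioP //.
  by rewrite !mulr1 [X in _ == X]mulrC.
by rewrite -[in RHS]pi_ratio reprK mulfK // tofrac_eq0 denom_ratioP.
Qed.

Lemma fraction_quotient (x : Kf) : exists a b, b != 0 /\ x = a%:F / b%:F.
Proof.
exists (\n_(repr x)), (\d_(repr x)).
by split; [exact: denom_ratioP | exact: repr_fracE].
Qed.

Section LiftFrac.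
Variable f : {rmorphism Pring -> Pring}.
Hypothesis f_inj : injective f.

Lemma rmorph_inj_neq0 p : p != 0 -> f p != 0.
Proof. by rewrite raddf_eq0. Qed.

Lemma lift_frac_div a b : b != 0 -> lift_frac f (a%:F / b%:F) = (f a)%:F / (f b)%:F.
Proof.
move=> b0; rewrite /lift_frac; set x := a%:F / b%:F.
set n := \n_(repr x); set d := \d_(repr x).
have d0 : d != 0 := denom_ratioP _.
have cross : a * d = n * b.
  apply/eqP; rewrite -tofrac_eq !rmorphM /= -eqr_div ?tofrac_eq0 //.
  by rewrite -[n%:F / _]repr_fracE.
apply/eqP; rewrite eqr_div ?tofrac_eq0 ?rmorph_inj_neq0 //.
by rewrite -!rmorphM /= cross.
Qed.

Lemma lift_frac_tofrac a : lift_frac f a%:F = (f a)%:F.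
Proof.
have -> : a%:F = a%:F / 1%:F by rewrite rmorph1 divr1.
by rewrite lift_frac_div ?oner_neq0 // !rmorph1 divr1.
Qed.

Lemma lift_frac_is_zmod_morphism : zmod_morphism (lift_frac f).
Proof.
move=> x y; have [a [b [b0 ->]]] := fraction_quotient x.
have [c [d [d0 ->]]] := fraction_quotient y.
have subE (p q r t : Pring) : r != 0 -> t != 0 ->
    p%:F / r%:F - q%:F / t%:F = (p * t + - q * r)%:F / (r * t)%:F.
  move=> r0 t0; rewrite -mulNr -rmorphN addf_div ?tofrac_eq0 //.
  by rewrite -!rmorphM -rmorphD.
have bd0 : b * d != 0 by rewrite mulf_neq0.
rewrite subE // !lift_frac_div //.
by rewrite subE ?rmorph_inj_neq0 // (rmorphD f) !(rmorphM f) (rmorphN f).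
Qed.

Lemma lift_frac_is_monoid_morphism : monoid_morphism (lift_frac f).
Proof.
split; first by rewrite -tofrac1 lift_frac_tofrac rmorph1.
move=> x y; have [a [b [b0 ->]]] := fraction_quotient x.
have [c [d [d0 ->]]] := fraction_quotient y.
have bd0 : b * d != 0 by rewrite mulf_neq0.
rewrite mulf_div -!rmorphM !lift_frac_div //.
by rewrite mulf_div -!rmorphM !(rmorphM f).
Qed.

End LiftFrac.

Definition scaleX_m : {poly {poly rat}} := ('X : {poly rat})%:P * 'X.
HB.instance Definition _ := GRing.RMorphism.copy sigmP_m (map_poly (comp_poly scaleX_m)).
Definition scaleX_n : Pring := ((('X : {poly rat})%:P : {poly {poly rat}})%:P) * 'X.
HB.instance Definition _ := GRing.RMorphism.copy sigmP_n (comp_poly scaleX_n).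

Lemma size_scaleX_m : size scaleX_m = 2.
Proof. by rewrite size_mulX ?polyC_eq0 ?polyX_eq0 // size_polyC polyX_eq0. Qed.

Lemma size_scaleX_n : size scaleX_n = 2.
Proof. by rewrite size_mulX ?polyC_eq0 ?polyX_eq0 // size_polyC !polyC_eq0 polyX_eq0. Qed.

Lemma sigmP_m_inj : injective sigmP_m.
Proof. exact/map_inj_poly/rmorph0/comp_poly2_inj/size_scaleX_m. Qed.

Lemma sigmP_n_inj : injective sigmP_n.
Proof. exact/comp_poly2_inj/size_scaleX_n. Qed.

Lemma sigmP_mE p : sigmP_m p = map_poly (comp_poly scaleX_m) p.
Proof. by []. Qed.

Lemma sigmP_mn p : sigmP_m (sigmP_n p) = sigmP_n (sigmP_m p).
Proof.
rewrite !sigmP_mE map_comp_poly; congr (_ \Po _).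
by rewrite /scaleX_n rmorphM /= map_polyC map_polyX /= comp_polyC.
Qed.

HB.instance Definition _ := GRing.isZmodMorphism.Build Kf Kf sigma_m
  (lift_frac_is_zmod_morphism sigmP_m_inj).
HB.instance Definition _ := GRing.isMonoidMorphism.Build Kf Kf sigma_m
  (lift_frac_is_monoid_morphism sigmP_m_inj).
HB.instance Definition _ := GRing.isZmodMorphism.Build Kf Kf sigma_n
  (lift_frac_is_zmod_morphism sigmP_n_inj).
HB.instance Definition _ := GRing.isMonoidMorphism.Build Kf Kf sigma_n
  (lift_frac_is_monoid_morphism sigmP_n_inj).

Lemma sigma_m_s : sigma_m s_ = s_.
Proof.
rewrite /sigma_m (lift_frac_tofrac sigmP_m_inj) /= sigmP_mE /sP.
by rewrite map_polyC /= comp_polyC.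
Qed.

Lemma sigma_m_Qm : sigma_m Qm = s_ * Qm.
Proof.
rewrite /sigma_m (lift_frac_tofrac sigmP_m_inj) /= sigmP_mE /QmP map_polyC /= comp_polyX.
by rewrite -rmorphM /= polyCM.
Qed.

Lemma sigma_m_Qn : sigma_m Qn = Qn.
Proof. by rewrite /sigma_m (lift_frac_tofrac sigmP_m_inj) /= sigmP_mE /QnP map_polyX. Qed.

Lemma sigma_n_s : sigma_n s_ = s_.
Proof. by rewrite /sigma_n (lift_frac_tofrac sigmP_n_inj) /= /sigmP_n comp_polyC. Qed.

Lemma sigma_n_Qm : sigma_n Qm = Qm.
Proof. by rewrite /sigma_n (lift_frac_tofrac sigmP_n_inj) /= /sigmP_n comp_polyC. Qed.

Lemma sigma_n_Qn : sigma_n Qn = s_ * Qn.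
Proof.
by rewrite /sigma_n (lift_frac_tofrac sigmP_n_inj) /= /sigmP_n comp_polyX -rmorphM.
Qed.

Lemma sigma_m_frac a b :
  b != 0 -> sigma_m (a%:F / b%:F) = (sigmP_m a)%:F / (sigmP_m b)%:F.
Proof. exact: (lift_frac_div sigmP_m_inj). Qed.

Lemma sigma_n_frac a b :
  b != 0 -> sigma_n (a%:F / b%:F) = (sigmP_n a)%:F / (sigmP_n b)%:F.
Proof. exact: (lift_frac_div sigmP_n_inj). Qed.

Lemma sigma_mn x : sigma_m (sigma_n x) = sigma_n (sigma_m x).
Proof.
have [a [b [b0 ->]]] := fraction_quotient x.
have [m_inj n_inj] := (sigmP_m_inj, sigmP_n_inj).
rewrite sigma_n_frac // sigma_m_frac ?rmorph_inj_neq0 //.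
by rewrite sigma_m_frac // sigma_n_frac ?rmorph_inj_neq0 // !sigmP_mn.
Qed.

HB.instance Definition _ j i :=
  GRing.RMorphism.copy (shift j i) (iter j sigma_m \o iter i sigma_n).

Lemma shift_shift j i l k a : shift j i (shift l k a) = shift (j + l) (i + k) a.
Proof. by rewrite /shift -(iter_comm sigma_mn) -!iterD. Qed.

Local Notation twist j i := (map_poly (map_poly (shift j i))).

Definition mon (a : Kf) (j i : nat) : Alg := (a%:P * 'X^j)%:P * 'X^i.

Definition amul_term (q : Alg) (i j : nat) (a : Kf) : Alg :=
  a%:P%:P * twist j i q * ('X^j)%:P * 'X^i.

Definition amul_row (q : Alg) (i : nat) (P : {poly Kf}) : Alg :=
  \sum_(j < size P) amul_term q i j P`_j.

Lemma amulE p q : amul p q = \sum_(i < size p) amul_row q i p`_i.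
Proof. by []. Qed.

Lemma amul_row_is_zmod_morphism q i : zmod_morphism (amul_row q i).
Proof.
by apply: sum_coef_is_zmod_morphism => j a b; rewrite /amul_term !rmorphB !mulrBl.
Qed.

Lemma coef_mon a j i k : (mon a j i)`_k = if k == i then a%:P * 'X^j else 0.
Proof. by rewrite coefMXn coefC subn_eq0; case: ltngtP. Qed.

Lemma coef_CXn (a : Kf) j k : (a%:P * 'X^j)`_k = if k == j then a else 0.
Proof. by rewrite coefCM coefXn mulr_natr; case: eqP. Qed.

Lemma amul_mon a j i q : amul (mon a j i) q = mon a j i * twist j i q.
Proof.
have row0 k : amul_row q k 0 = 0 by rewrite /amul_row size_poly0 big_ord0.
rewrite amulE (@sum_coef_widen _ _ _ _ i.+1) //; last first.
  by apply/leq_sizeP => k lt_i_k; rewrite coef_mon gtn_eqF.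
rewrite big_ord_recr big1 /= => [|k _]; last by rewrite coef_mon ltn_eqF.
rewrite add0r coef_mon eqxx /amul_row (@sum_coef_widen _ _ _ _ j.+1); first last.
- by apply/leq_sizeP => k lt_j_k; rewrite coef_CXn gtn_eqF.
- by move=> k; rewrite /amul_term !rmorph0 !mul0r.
rewrite big_ord_recr big1 /= => [|k _]; last first.
  by rewrite coef_CXn ltn_eqF // /amul_term !rmorph0 !mul0r.
rewrite add0r coef_CXn eqxx /amul_term /mon rmorphM /= -!mulrA; congr (_ * _).
by rewrite mulrC mulrA.
Qed.

Lemma mon_expansion (p : Alg) :
  p = \sum_(i < size p) \sum_(j < size p`_i) mon p`_i`_j j i.
Proof.
rewrite -[p in LHS]coefK poly_def; apply: eq_bigr => i _.
rewrite -mul_polyC -[p`_i in LHS]coefK poly_def rmorph_sum mulr_suml.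
by apply: eq_bigr => j _; rewrite -mul_polyC.
Qed.

Lemma additive_eq_on_mon (V : zmodType) (f g : Alg -> V) :
  zmod_morphism f -> zmod_morphism g ->
  (forall a j i, f (mon a j i) = g (mon a j i)) -> f =1 g.
Proof.
move=> fB gB fg_mon p.
pose fA : {additive Alg -> V} := HB.pack f (GRing.isZmodMorphism.Build _ _ f fB).
pose gA : {additive Alg -> V} := HB.pack g (GRing.isZmodMorphism.Build _ _ g gB).
rewrite (mon_expansion p) -[f _]/(fA _) -[g _]/(gA _) !raddf_sum.
by apply: eq_bigr => i _; rewrite !raddf_sum; apply: eq_bigr => j _; apply: fg_mon.
Qed.

Lemma twist00 p : twist 0 0 p = p.
Proof. by apply/polyP => n; rewrite coef_map; apply/polyP => m; rewrite coef_map. Qed.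

Lemma twist_twist j i l k p : twist j i (twist l k p) = twist (j + l) (i + k) p.
Proof.
apply/polyP => n; rewrite !coef_map; apply/polyP => m.
by rewrite !coef_map /= shift_shift.
Qed.

Lemma twist_mon j i b l k : twist j i (mon b l k) = mon (shift j i b) l k.
Proof.
apply/polyP => n; rewrite coef_map [RHS]coef_mon coef_mon.
case: eqP => _; last exact: raddf0.
apply/polyP => m; rewrite coef_map [RHS]coef_CXn coef_CXn.
by case: eqP => _; last exact: raddf0.
Qed.

Lemma mon_mul a j i b l k : mon a j i * mon b l k = mon (a * b) (j + l) (i + k).
Proof. exact: bimonomialM. Qed.

Lemma amulBl p q r : amul (p - q) r = amul p r - amul q r.
Proof. exact: (sum_coef_is_zmod_morphism (amul_row_is_zmod_morphism r)). Qed.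

Lemma amulBr p q r : amul p (q - r) = amul p q - amul p r.
Proof.
rewrite !amulE -sumrB; apply: eq_bigr => i _; rewrite /amul_row -sumrB.
by apply: eq_bigr => j _; rewrite /amul_term rmorphB mulrBr !mulrBl.
Qed.

Lemma twist_amul j i q r : twist j i (amul q r) = amul (twist j i q) (twist j i r).
Proof.
move: q; apply: additive_eq_on_mon => [x y|x y|b l k].
- by rewrite amulBl rmorphB.
- by rewrite rmorphB amulBl.
rewrite amul_mon twist_mon amul_mon rmorphM /= twist_mon !twist_twist.
by rewrite addnC [(k + i)%N]addnC.
Qed.

Lemma amul_monl a j i x r : amul (mon a j i * x) r = mon a j i * amul x (twist j i r).
Proof.
move: x; apply: additive_eq_on_mon => [x y|x y|b l k].
- by rewrite mulrBr amulBl.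
- by rewrite amulBl mulrBr.
by rewrite mon_mul !amul_mon mulrA mon_mul twist_twist [(l + j)%N]addnC [(k + i)%N]addnC.
Qed.

Lemma amulA : associative amul.
Proof.
move=> p q r; move: p; apply: additive_eq_on_mon => [x y|x y|a j i].
- by rewrite /= amulBl.
- by rewrite /= !amulBl.
by rewrite amul_mon [in RHS]amul_mon amul_monl twist_amul.
Qed.

Lemma mon1 : mon 1 0 0 = 1.
Proof. by rewrite /mon !expr0 !mulr1. Qed.

Lemma amul1l : left_id 1 amul.
Proof. by move=> q; rewrite -mon1 amul_mon mon1 mul1r twist00. Qed.

Lemma amul1r : right_id 1 amul.
Proof.
move=> p; move: p; apply: additive_eq_on_mon => [x y|//|a j i].
- exact: amulBl.
by rewrite amul_mon rmorph1 mulr1.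
Qed.

Lemma amul0l r : amul 0 r = 0.
Proof. by have := amulBl 0 0 r; rewrite !subrr. Qed.

Lemma amul0r p : amul p 0 = 0.
Proof. by have := amulBr p 0 0; rewrite !subrr. Qed.

Lemma amulDl : left_distributive amul +%R.
Proof.
move=> p q r; have amulNl x : amul (- x) r = - amul x r.
  by rewrite -sub0r amulBl amul0l sub0r.
by rewrite -{1}[q]opprK amulBl amulNl opprK.
Qed.

Lemma amulDr : right_distributive amul +%R.
Proof.
move=> p q r; have amulNr x : amul p (- x) = - amul p x.
  by rewrite -sub0r amulBr amul0r sub0r.
by rewrite -{1}[r]opprK amulBr amulNr opprK.
Qed.

(* Alg carries the commutative product of polynomials; the alias Aring carries
   the skew product amul. *)
Definition Aring : Type := Alg.
HB.instance Definition _ := GRing.Zmodule.on Aring.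
HB.instance Definition _ := GRing.Zmodule_isNzRing.Build Aring
  amulA amul1l amul1r amulDl amulDr (oner_neq0 Alg).

Lemma amul_AringE (p q : Alg) : amul p q = (p : Aring) * (q : Aring).
Proof. by []. Qed.

Lemma cst_mon a : cst a = mon a 0 0.
Proof. by rewrite /mon !expr0 !mulr1. Qed.

Lemma Em_mon : Em = mon 1 1 0.
Proof. by rewrite /mon expr0 expr1 mulr1 mul1r. Qed.

Lemma En_mon : En = mon 1 0 1.
Proof. by rewrite /mon expr0 expr1 mulr1 polyC1 mul1r. Qed.

Lemma cst_is_zmod_morphism : zmod_morphism (cst : Kf -> Aring).
Proof. by move=> a b; rewrite /cst !rmorphB. Qed.

Lemma cst_is_monoid_morphism : monoid_morphism (cst : Kf -> Aring).
Proof.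
split=> [|a b]; first by rewrite /cst !rmorph1.
by rewrite /= -amul_AringE [cst a]cst_mon amul_mon twist00 -cst_mon /cst -!polyCM.
Qed.

Definition constA (a : Kf) : Aring := cst a.
HB.instance Definition _ :=
  GRing.isZmodMorphism.Build Kf Aring constA cst_is_zmod_morphism.
HB.instance Definition _ :=
  GRing.isMonoidMorphism.Build Kf Aring constA cst_is_monoid_morphism.

Lemma Em_constA a : (Em : Aring) * constA a = constA (sigma_m a) * Em.
Proof.
rewrite /constA -!amul_AringE Em_mon !cst_mon !amul_mon ?twist00 twist_mon.
by rewrite !mon_mul mul1r mulr1.
Qed.

Lemma En_constA a : (En : Aring) * constA a = constA (sigma_n a) * En.
Proof.
rewrite /constA -!amul_AringE En_mon !cst_mon !amul_mon ?twist00 twist_mon.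
by rewrite !mon_mul mul1r mulr1.
Qed.

Lemma Em_En : GRing.comm (Em : Aring) En.
Proof.
rewrite /GRing.comm -!amul_AringE Em_mon En_mon !amul_mon !twist_mon.
by rewrite !mon_mul !rmorph1.
Qed.

Definition skew_linear (tau : Kf -> Kf) (E x : Aring) :=
  exists a b, [/\ tau a = a, tau b = b & x = constA a * E + constA b].

Lemma skew_linear_comm x y :
  skew_linear sigma_n Em x -> skew_linear sigma_m En y -> GRing.comm x y.
Proof.
move=> [a [b [fa fb ->]]] [c [d [fc fd ->]]].
have cst_cst u v : GRing.comm (constA u) (constA v).
  by rewrite /GRing.comm -[LHS]rmorphM -[RHS]rmorphM mulrC.
have Em_cst v : sigma_m v = v -> GRing.comm (Em : Aring) (constA v).
  by move=> fv; rewrite /GRing.comm [LHS]Em_constA fv.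
have cst_En u : sigma_n u = u -> GRing.comm (constA u) En.
  by move=> fu; rewrite /GRing.comm [RHS]En_constA fu.
have x_cst w : sigma_m w = w -> GRing.comm (constA a * Em + constA b) (constA w).
  move=> fw; apply/commr_sym/commrD; last exact: cst_cst.
  by apply: commrM; [exact: cst_cst | exact/commr_sym/Em_cst].
have x_En : GRing.comm (constA a * Em + constA b) En.
  apply/commr_sym/commrD; last exact/commr_sym/cst_En.
  by apply: commrM; [exact/commr_sym/cst_En | exact/commr_sym/Em_En].
by apply: commrD; [apply: commrM|]; [exact: x_cst | exact: x_En | exact: x_cst].
Qed.

Section LinearFactors.
Variables (tau : {rmorphism Kf -> Kf}) (E : Aring) (Q : Kf).
Hypotheses (tau_s : tau s_ = s_) (tau_Q : tau Q = Q).

Let tau_Phi k : tau (Phi k Q) = Phi k Q.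
Proof. by rewrite /Phi rmorphB rmorph1 rmorphM !rmorphXn tau_s tau_Q. Qed.

Lemma skew_linear_u1 : skew_linear tau E (u1 E Q).
Proof.
exists (Phi 6 Q)^-1, (- (s_ ^+ 2 * Q ^+ 2 / Phi 2 Q)); split.
- by rewrite fmorphV tau_Phi.
- by rewrite rmorphN rmorphM fmorphV tau_Phi rmorphM !rmorphXn tau_s tau_Q.
- by rewrite [constA (- _)]rmorphN.
Qed.

Lemma skew_linear_v1 : skew_linear tau E (v1 E Q).
Proof.
exists (s_ ^+ 2 * Q ^+ 2 / Phi 6 Q), (- (Phi 2 Q)^-1); split.
- by rewrite rmorphM fmorphV tau_Phi rmorphM !rmorphXn tau_s tau_Q.
- by rewrite rmorphN fmorphV tau_Phi.
- by rewrite [constA (- _)]rmorphN.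
Qed.

Lemma skew_linear_X : skew_linear tau E (E - cst (s_ ^+ 2 * Q ^+ 2)).
Proof.
exists 1, (- (s_ ^+ 2 * Q ^+ 2)); split.
- exact: rmorph1.
- by rewrite rmorphN rmorphM !rmorphXn tau_s tau_Q.
- by rewrite [constA (- _)]rmorphN [constA 1]rmorph1 mul1r.
Qed.

Lemma skew_linear_Y : skew_linear tau E (amul (cst (Q ^+ 2)) E - 1).
Proof.
exists (Q ^+ 2), (- 1); split.
- by rewrite rmorphXn tau_Q.
- by rewrite rmorphN rmorph1.
- by rewrite [constA (- _)]rmorphN rmorph1.
Qed.
End LinearFactors.

Lemma Phi_neq0 k (q : Pring) : (0 < k)%N -> Phi k q%:F != 0.
Proof.
move=> k_gt0.
have -> : Phi k q%:F = (1 - sP ^+ k * q ^+ 4)%:F.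
  by rewrite /Phi /s_ rmorphB rmorph1 rmorphM !rmorphXn.
rewrite tofrac_eq0; apply/eqP.
move=> /(congr1 (horner_eval (0 : rat) \o horner_eval 0 \o horner_eval 0))/eqP.
rewrite rmorphB rmorph1 rmorphM !rmorphXn rmorph0 /= !horner_evalE /sP !hornerC hornerX.
by rewrite expr0n gtn_eqF // mul0r subr0 oner_eq0.
Qed.

Theorem lemma4p4 : exists C : Alg, A2 = amul C Atilde.
Proof.
pose um : Aring := u1 Em Qm; pose vm : Aring := v1 Em Qm.
pose xm : Aring := Em - cst (s_ ^+ 2 * Qm ^+ 2).
pose ym : Aring := amul (cst (Qm ^+ 2)) Em - 1.
pose un : Aring := u1 En Qn; pose vn : Aring := v1 En Qn.
pose xn : Aring := En - cst (s_ ^+ 2 * Qn ^+ 2).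
pose yn : Aring := amul (cst (Qn ^+ 2)) En - 1.
have uym : um * ym = vm * xm.
  exact: (u1Y_eq_v1X Em_constA sigma_m_s sigma_m_Qm
    (@Phi_neq0 2 QmP isT) (@Phi_neq0 6 QmP isT)).
have uyn : un * yn = vn * xn.
  exact: (u1Y_eq_v1X En_constA sigma_n_s sigma_n_Qn
    (@Phi_neq0 2 QnP isT) (@Phi_neq0 6 QnP isT)).
have A2E : A2 = (un * xn * vm * ym - um * xm * vn * yn) * constA Qm * constA Qn.
  rewrite /A2; exact: erefl.
have AtildeE : Atilde = (xn * ym - xm * yn) * constA Qm * constA Qn.
  rewrite /Atilde; exact: erefl.
have key := two_variable_factorization (um := um) (vm := vm) (xm := xm) (ym := ym)
  (un := un) (vn := vn) (xn := xn) (yn := yn) skew_linear_comm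
  (skew_linear_u1 Em sigma_n_s sigma_n_Qm) (skew_linear_v1 Em sigma_n_s sigma_n_Qm)
  (skew_linear_X Em sigma_n_s sigma_n_Qm) (skew_linear_Y Em sigma_n_Qm)
  (skew_linear_u1 En sigma_m_s sigma_m_Qn) (skew_linear_v1 En sigma_m_s sigma_m_Qn)
  (skew_linear_X En sigma_m_s sigma_m_Qn) uym uyn.
exists (un * vm + um * vn); rewrite A2E [amul _ _]amul_AringE AtildeE.
(* Opaque names stop unification from unfolding amul while rewriting. *)
clearbody um vm xm ym un vn xn yn.
by rewrite key !mulrA.
Qed.
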